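(* Let $W$ be a finite-dimensional battery system with Hamiltonian $H_W$ and let $|0\rangle_W$ be an eigenvector of $H_W$. Suppose $\mathcal{T}$ is a Thermal Operation on $SW$ (with respect to $H_S\otimes\mathbb{I}+\mathbb{I}\otimes H_W$) such that $\mathcal{T}(\rho_S\otimes|0\rangle\langle0|_W)=\gamma_S\otimes\sigma_W$ for some state $\sigma_W$ with $[\sigma_W,H_W]=0$. Then also $\mathcal{T}(\mathcal{D}(\rho_S)\otimes|0\rangle\langle0|_W)=\gamma_S\otimes\sigma_W$.
   Context: $S$ is a finite-dimensional system with Hamiltonian $H_S$, $\beta>0$, $\gamma_S=e^{-\beta H_S}/\mathrm{tr}\,e^{-\beta H_S}$. A Thermal Operation on a system $X$ with Hamiltonian $H_X$ is a channel $\mathcal{T}(\rho)=\mathrm{tr}_B[U(\rho\otimes\gamma_B)U^\dagger]$ with $B$ any finite-dimensional system, $H_B$ any Hamiltonian, $\gamma_B=e^{-\beta H_B}/\mathrm{tr}\,e^{-\beta H_B}$, and $U$ unitary with $[U,H_X\otimes\mathbb{I}+\mathbb{I}\otimes H_B]=0$. $\mathcal{D}(\rho)=\lim_{s\to\infty}\frac1s\int_0^se^{-iH_St}\rho e^{iH_St}dt$ is the dephasing map on $S$. *)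

From Stdlib Require Import Reals Arith.
Open Scope R_scope.

Record Cplx := mkC { re : R ; im : R }.
Definition C0 : Cplx := mkC 0 0.
Definition C1 : Cplx := mkC 1 0.
Definition RtoC (r : R) : Cplx := mkC r 0.
Definition Cadd (a b : Cplx) : Cplx := mkC (re a + re b) (im a + im b).
Definition Copp (a : Cplx) : Cplx := mkC (- re a) (- im a).
Definition Cmul (a b : Cplx) : Cplx :=
  mkC (re a * re b - im a * im b) (re a * im b + im a * re b).
Definition Cconj (a : Cplx) : Cplx := mkC (re a) (- im a).

Fixpoint csum (n : nat) (f : nat -> Cplx) : Cplx :=
  match n with
  | O => C0
  | S m => Cadd (csum m f) (f m)
  end.

(* ---------- matrices: a d x d matrix is a function nat -> nat -> C whose
   entries with indices < d are the meaningful ones ---------- *)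
Definition Mat := nat -> nat -> Cplx.
Definition Vec := nat -> Cplx.

Definition meq (d : nat) (A B : Mat) : Prop :=
  forall i j, (i < d)%nat -> (j < d)%nat -> A i j = B i j.

Definition mI : Mat := fun i j => if Nat.eqb i j then C1 else C0.
Definition madd (A B : Mat) : Mat := fun i j => Cadd (A i j) (B i j).
Definition mscale (c : Cplx) (A : Mat) : Mat := fun i j => Cmul c (A i j).
Definition mmul (d : nat) (A B : Mat) : Mat :=
  fun i j => csum d (fun k => Cmul (A i k) (B k j)).
Definition madj (A : Mat) : Mat := fun i j => Cconj (A j i).
Definition mtrace (d : nat) (A : Mat) : Cplx := csum d (fun i => A i i).
Definition mapply (d : nat) (A : Mat) (v : Vec) : Vec :=
  fun i => csum d (fun k => Cmul (A i k) (v k)).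

Fixpoint mpow (d : nat) (A : Mat) (k : nat) : Mat :=
  match k with
  | O => mI
  | S m => mmul d (mpow d A m) A
  end.

(* Tensor product A (x) B, where B is dB x dB; the index of a basis vector
   |a> (x) |b> is a * dB + b. *)
Definition kron (dB : nat) (A B : Mat) : Mat :=
  fun i j => Cmul (A (i / dB)%nat (j / dB)%nat) (B (i mod dB)%nat (j mod dB)%nat).

Definition ptrace2 (dB : nat) (M : Mat) : Mat :=
  fun i j => csum dB (fun k => M (i * dB + k)%nat (j * dB + k)%nat).

Definition proj (v : Vec) : Mat := fun i j => Cmul (v i) (Cconj (v j)).

Definition hermitian (d : nat) (H : Mat) : Prop := meq d (madj H) H.
Definition unitary (d : nat) (U : Mat) : Prop :=
  meq d (mmul d U (madj U)) mI /\ meq d (mmul d (madj U) U) mI.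
Definition commutes (d : nat) (A B : Mat) : Prop :=
  meq d (mmul d A B) (mmul d B A).

Definition psd (d : nat) (A : Mat) : Prop :=
  forall v : Vec,
    0 <= re (csum d (fun i => csum d (fun j =>
                 Cmul (Cconj (v i)) (Cmul (A i j) (v j))))).

Definition density (d : nat) (rho : Mat) : Prop :=
  hermitian d rho /\ psd d rho /\ mtrace d rho = C1.

Definition exp_partial (d : nat) (A : Mat) (N : nat) : Mat :=
  fun i j => csum (S N) (fun k => Cmul (RtoC (/ INR (fact k))) (mpow d A k i j)).

Definition is_mexp (d : nat) (A E : Mat) : Prop :=
  forall i j, (i < d)%nat -> (j < d)%nat ->
    Un_cv (fun N => re (exp_partial d A N i j)) (re (E i j)) /\
    Un_cv (fun N => im (exp_partial d A N i j)) (im (E i j)).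

Definition is_gibbs (d : nat) (beta : R) (H gamma : Mat) : Prop :=
  exists E : Mat, is_mexp d (mscale (RtoC (- beta)) H) E /\
    meq d gamma (mscale (RtoC (/ re (mtrace d E))) E).

Definition thermal_op (dX : nat) (HX : Mat) (beta : R) (T : Mat -> Mat) : Prop :=
  exists (dB : nat) (HB gammaB U : Mat),
    (0 < dB)%nat /\ hermitian dB HB /\ is_gibbs dB beta HB gammaB /\
    unitary (dX * dB) U /\
    commutes (dX * dB) U (madd (kron dB HX mI) (kron dB mI HB)) /\
    forall rho : Mat,
      meq dX (T rho)
        (ptrace2 dB (mmul (dX * dB) (mmul (dX * dB) U (kron dB rho gammaB))
                                       (madj U))).

Definition time_avg_cv (g : R -> R) (l : R) : Prop :=
  forall eps, 0 < eps -> exists S, 0 < S /\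
    forall s, S <= s -> exists pr : Riemann_integrable g 0 s,
      Rabs (RiemannInt pr / s - l) < eps.

Definition is_dephased (d : nat) (H rho sigma : Mat) : Prop :=
  exists Ut : R -> Mat,
    (forall t, is_mexp d (mscale (mkC 0 (- t)) H) (Ut t)) /\
    forall i j, (i < d)%nat -> (j < d)%nat ->
      time_avg_cv (fun t => re (mmul d (mmul d (Ut t) rho) (madj (Ut t)) i j))
                  (re (sigma i j)) /\
      time_avg_cv (fun t => im (mmul d (mmul d (Ut t) rho) (madj (Ut t)) i j))
                  (im (sigma i j)).

From Pilot Require Import Defs.
From Stdlib Require Import Reals Arith.
From Stdlib Require Import Lia Lra Setoid Morphisms Ring FunctionalExtensionality.
Open Scope R_scope.

(* Since the dilation unitary commutes with the total Hamiltonian of system, battery and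
   bath, a thermal operation is covariant: conjugating its input by the free evolution
   e^(-itH) conjugates its output by the same evolution.  The input rho_S (x) |0><0| evolves
   into rho_S(t) (x) |0><0| because |0> is an eigenvector of H_W, while the output
   gamma_S (x) sigma_W is stationary; hence T(rho_S(t) (x) |0><0|) = gamma_S (x) sigma_W for
   every t.  The dephased state is the time average of rho_S(t), and every entry of
   T(. (x) |0><0|) is a linear functional of its argument, so it commutes with time
   averaging, and the time average of a constant is that constant.
   The analytic input is the matrix exponential: its existence, its intertwining
   properties, and e^(A+B) = e^A e^B for commuting A and B, which splits the free evolution
   into a tensor product and makes it unitary. *)

(* Importing the Reals library shadows [Defs.C1] by the cosine remainder [Cos_rel.C1]. *)
Notation C1 := Defs.C1.

Lemma Cplx_ext (a b : Cplx) : re a = re b -> im a = im b -> a = b.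
Proof. destruct a, b; simpl; intros; subst; reflexivity. Qed.

Definition Csub (a b : Cplx) : Cplx := Cadd a (Copp b).

Lemma Cring_theory : ring_theory C0 C1 Cadd Cmul Csub Copp (@eq Cplx).
Proof.
  constructor; intros; apply Cplx_ext; destruct x; try destruct y; try destruct z;
  unfold Cadd, Cmul, Csub, Copp, C0, C1; simpl; ring.
Qed.
Add Ring Cring : Cring_theory.

Ltac Csolve := apply Cplx_ext; simpl; ring.

Lemma RtoC_mul (a b : R) : RtoC (a * b) = Cmul (RtoC a) (RtoC b).
Proof. Csolve. Qed.
Lemma RtoC_add (a b : R) : RtoC (a + b) = Cadd (RtoC a) (RtoC b).
Proof. Csolve. Qed.
Lemma Cconj_mul (a b : Cplx) : Cconj (Cmul a b) = Cmul (Cconj a) (Cconj b).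
Proof. Csolve. Qed.
Lemma Cconj_add (a b : Cplx) : Cconj (Cadd a b) = Cadd (Cconj a) (Cconj b).
Proof. Csolve. Qed.
Lemma Cconj_involutive (a : Cplx) : Cconj (Cconj a) = a.
Proof. Csolve. Qed.
Lemma Cconj_RtoC (r : R) : Cconj (RtoC r) = RtoC r.
Proof. Csolve. Qed.

Lemma csum_ext (n : nat) (f g : nat -> Cplx) :
  (forall k, (k < n)%nat -> f k = g k) -> csum n f = csum n g.
Proof.
  induction n as [|n IH]; intros Hfg; simpl; auto.
  rewrite IH, Hfg; auto; intros; apply Hfg; lia.
Qed.

Lemma csum_add (n : nat) (f g : nat -> Cplx) :
  csum n (fun k => Cadd (f k) (g k)) = Cadd (csum n f) (csum n g).
Proof. induction n as [|n IH]; simpl; [Csolve | rewrite IH; ring]. Qed.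

Lemma csum_mull (n : nat) (c : Cplx) (f : nat -> Cplx) :
  csum n (fun k => Cmul c (f k)) = Cmul c (csum n f).
Proof. induction n as [|n IH]; simpl; [Csolve | rewrite IH; ring]. Qed.

Lemma csum_mulr (n : nat) (c : Cplx) (f : nat -> Cplx) :
  csum n (fun k => Cmul (f k) c) = Cmul (csum n f) c.
Proof. induction n as [|n IH]; simpl; [Csolve | rewrite IH; ring]. Qed.

Lemma csum_opp (n : nat) (f : nat -> Cplx) :
  csum n (fun k => Copp (f k)) = Copp (csum n f).
Proof. induction n as [|n IH]; simpl; [Csolve | rewrite IH; ring]. Qed.

Lemma csum_eq0 (n : nat) (f : nat -> Cplx) :
  (forall k, (k < n)%nat -> f k = C0) -> csum n f = C0.
Proof.
  induction n as [|n IH]; intros Hf; simpl; auto.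
  rewrite IH, Hf; [ring | lia | intros; apply Hf; lia].
Qed.

Lemma csum_swap (n m : nat) (f : nat -> nat -> Cplx) :
  csum n (fun i => csum m (fun j => f i j)) = csum m (fun j => csum n (fun i => f i j)).
Proof.
  induction n as [|n IH]; simpl.
  - symmetry; apply csum_eq0; auto.
  - rewrite IH, <- csum_add. reflexivity.
Qed.

Lemma csum_split (m n : nat) (f : nat -> Cplx) :
  csum (m + n) f = Cadd (csum m f) (csum n (fun b => f (m + b)%nat)).
Proof.
  induction n as [|n IH]; simpl.
  - rewrite Nat.add_0_r. ring.
  - rewrite Nat.add_succ_r. simpl. rewrite IH. ring.
Qed.

Lemma csum_prod_index (m n : nat) (f : nat -> Cplx) :
  csum (m * n) f = csum m (fun a => csum n (fun b => f (a * n + b)%nat)).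
Proof.
  induction m as [|m IH]; simpl; auto.
  rewrite Nat.add_comm, csum_split, IH. reflexivity.
Qed.

Lemma csum_first (n : nat) (f : nat -> Cplx) :
  csum (S n) f = Cadd (f O) (csum n (fun k => f (S k))).
Proof. induction n as [|n IH]; simpl; [ring | simpl in IH; rewrite IH; ring]. Qed.

Lemma csum_delta (n j : nat) (f : nat -> Cplx) : (j < n)%nat ->
  csum n (fun k => if Nat.eqb k j then f k else C0) = f j.
Proof.
  induction n as [|n IH]; intros Hj; [lia|]. simpl.
  destruct (Nat.eq_dec j n) as [->|Hne].
  - rewrite Nat.eqb_refl, csum_eq0; [ring|].
    intros k Hk. destruct (Nat.eqb_spec k n); [lia|auto].
  - rewrite IH by lia. destruct (Nat.eqb_spec n j); [lia|ring].
Qed.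

Lemma csum_mul_csum (m n : nat) (f g : nat -> Cplx) :
  Cmul (csum m f) (csum n g) = csum m (fun a => csum n (fun b => Cmul (f a) (g b))).
Proof. rewrite <- csum_mulr. apply csum_ext; intros. rewrite <- csum_mull. auto. Qed.

Lemma Cconj_csum (n : nat) (f : nat -> Cplx) :
  Cconj (csum n f) = csum n (fun k => Cconj (f k)).
Proof. induction n as [|n IH]; simpl; [Csolve | rewrite Cconj_add, IH; auto]. Qed.

Lemma re_csum_S (N : nat) (f : nat -> Cplx) :
  re (csum (S N) f) = sum_f_R0 (fun k => re (f k)) N.
Proof. induction N as [|N IH]; simpl in *; [ring | rewrite IH; reflexivity]. Qed.

Lemma im_csum_S (N : nat) (f : nat -> Cplx) :
  im (csum (S N) f) = sum_f_R0 (fun k => im (f k)) N.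
Proof. induction N as [|N IH]; simpl in *; [ring | rewrite IH; reflexivity]. Qed.

(** * Matrix algebra *)

Lemma divmod_pair (n a b : nat) : (b < n)%nat -> ((a * n + b) / n = a /\ (a * n + b) mod n = b)%nat.
Proof.
  intros Hb. split.
  - symmetry; apply (Nat.div_unique _ _ _ b); lia.
  - symmetry; apply (Nat.mod_unique _ _ a); lia.
Qed.

Lemma div_lt_prod (m n i : nat) : (i < m * n)%nat -> (i / n < m)%nat.
Proof. intros. apply Nat.Div0.div_lt_upper_bound. lia. Qed.

Lemma mod_lt_prod (m n i : nat) : (i < m * n)%nat -> (i mod n < n)%nat.
Proof. intros. apply Nat.mod_upper_bound. intros ->. lia. Qed.

#[export] Instance meq_equiv (d : nat) : Equivalence (meq d).
Proof.
  split; unfold meq; intros ? *; intros; [auto | symmetry; auto |].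
  rewrite H by auto; auto.
Qed.

#[export] Instance mmul_proper (d : nat) : Proper (meq d ==> meq d ==> meq d) (mmul d).
Proof.
  intros A A' HA B B' HB i j Hi Hj. unfold mmul. apply csum_ext; intros.
  rewrite HA, HB by auto; auto.
Qed.
#[export] Instance mscale_proper (d : nat) (c : Cplx) : Proper (meq d ==> meq d) (mscale c).
Proof. intros A A' HA i j Hi Hj. unfold mscale. rewrite HA by auto; auto. Qed.
#[export] Instance madj_proper (d : nat) : Proper (meq d ==> meq d) madj.
Proof. intros A A' HA i j Hi Hj. unfold madj. rewrite HA by auto; auto. Qed.

Lemma meq_pointwise (d : nat) (A B : Mat) : (forall i j, A i j = B i j) -> meq d A B.
Proof. intros H i j _ _; auto. Qed.

Lemma mmul_assoc (d : nat) (A B C : Mat) :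
  meq d (mmul d (mmul d A B) C) (mmul d A (mmul d B C)).
Proof.
  apply meq_pointwise; intros. unfold mmul.
  rewrite <- (csum_ext _ (fun k => csum d (fun l => Cmul (A i l) (Cmul (B l k) (C k j))))).
  2:{ intros. rewrite <- csum_mulr. apply csum_ext; intros; ring. }
  rewrite csum_swap. apply csum_ext; intros. rewrite <- csum_mull. auto.
Qed.

Lemma mmul_madd_r (d : nat) (A B C : Mat) :
  meq d (mmul d C (madd A B)) (madd (mmul d C A) (mmul d C B)).
Proof. apply meq_pointwise; intros. unfold mmul, madd. rewrite <- csum_add. apply csum_ext; intros; ring. Qed.
Lemma mmul_mscale_l (d : nat) (c : Cplx) (A B : Mat) :
  meq d (mmul d (mscale c A) B) (mscale c (mmul d A B)).
Proof. apply meq_pointwise; intros. unfold mmul, mscale. rewrite <- csum_mull. apply csum_ext; intros; ring. Qed.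
Lemma mmul_mscale_r (d : nat) (c : Cplx) (A B : Mat) :
  meq d (mmul d A (mscale c B)) (mscale c (mmul d A B)).
Proof. apply meq_pointwise; intros. unfold mmul, mscale. rewrite <- csum_mull. apply csum_ext; intros; ring. Qed.

Lemma mmul_mI_l (d : nat) (A : Mat) : meq d (mmul d mI A) A.
Proof.
  intros i j Hi Hj. unfold mmul, mI.
  rewrite <- (csum_delta d i (fun k => A k j)) by auto. apply csum_ext; intros.
  destruct (Nat.eqb_spec i k), (Nat.eqb_spec k i); subst; try lia; ring.
Qed.
Lemma mmul_mI_r (d : nat) (A : Mat) : meq d (mmul d A mI) A.
Proof.
  intros i j Hi Hj. unfold mmul, mI.
  rewrite <- (csum_delta d j (fun k => A i k)) by auto. apply csum_ext; intros.
  destruct (Nat.eqb_spec k j); subst; ring.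
Qed.

Lemma mmul_csum_l (d n : nat) (F : nat -> Mat) (A : Mat) (i j : nat) :
  mmul d (fun i j => csum n (fun k => F k i j)) A i j = csum n (fun k => mmul d (F k) A i j).
Proof. unfold mmul. rewrite csum_swap. apply csum_ext; intros. rewrite csum_mulr. auto. Qed.
Lemma mmul_csum_r (d n : nat) (F : nat -> Mat) (A : Mat) (i j : nat) :
  mmul d A (fun i j => csum n (fun k => F k i j)) i j = csum n (fun k => mmul d A (F k) i j).
Proof. unfold mmul. rewrite csum_swap. apply csum_ext; intros. rewrite csum_mull. auto. Qed.

Lemma madj_mmul (d : nat) (A B : Mat) : meq d (madj (mmul d A B)) (mmul d (madj B) (madj A)).
Proof.
  apply meq_pointwise; intros. unfold madj, mmul. rewrite Cconj_csum.
  apply csum_ext; intros. rewrite Cconj_mul; ring.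
Qed.
Lemma madj_mI (d : nat) : meq d (madj mI) mI.
Proof.
  apply meq_pointwise; intros i j. unfold madj, mI.
  destruct (Nat.eqb_spec j i), (Nat.eqb_spec i j); subst; try lia; Csolve.
Qed.
Lemma madj_mscale (d : nat) (c : Cplx) (A : Mat) : meq d (madj (mscale c A)) (mscale (Cconj c) (madj A)).
Proof. apply meq_pointwise; intros. unfold madj, mscale. apply Cconj_mul. Qed.

Lemma commutes_sym (d : nat) (A B : Mat) : commutes d A B -> commutes d B A.
Proof. unfold commutes. intros H. symmetry. auto. Qed.

Lemma commutes_mscale (d : nat) (c : Cplx) (A B : Mat) : commutes d A B -> commutes d A (mscale c B).
Proof. unfold commutes. intros H. rewrite mmul_mscale_r, mmul_mscale_l, H. reflexivity. Qed.

Lemma unitary_conj_commuting (d : nat) (A V : Mat) : commutes d A V -> unitary d V ->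
  meq d (mmul d (mmul d V A) (madj V)) A.
Proof. intros HA [HV _]. unfold commutes in HA. rewrite <- HA, mmul_assoc, HV. apply mmul_mI_r. Qed.

Lemma conj_conj_comm (d : nat) (U G M : Mat) : commutes d U G ->
  meq d (mmul d (mmul d U (mmul d (mmul d G M) (madj G))) (madj U))
        (mmul d (mmul d G (mmul d (mmul d U M) (madj U))) (madj G)).
Proof.
  intros HUG. unfold commutes in HUG.
  assert (HUG_adj : meq d (mmul d (madj G) (madj U)) (mmul d (madj U) (madj G))).
  { rewrite <- !madj_mmul. apply madj_proper. apply HUG. }
  rewrite !mmul_assoc, <- (mmul_assoc d U G), HUG, HUG_adj, !mmul_assoc. reflexivity.
Qed.

(** * Tensor products and partial trace *)

Lemma kron_mixed (m n : nat) (A B C D : Mat) :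
  meq (m * n) (mmul (m * n) (kron n A B) (kron n C D)) (kron n (mmul m A C) (mmul n B D)).
Proof.
  intros i j Hi Hj. unfold mmul, kron. rewrite csum_mul_csum, csum_prod_index.
  apply csum_ext; intros a Ha. apply csum_ext; intros b Hb.
  destruct (divmod_pair n a b Hb) as [-> ->]. ring.
Qed.

Lemma kron_madj (d n : nat) (A B : Mat) : meq d (madj (kron n A B)) (kron n (madj A) (madj B)).
Proof. apply meq_pointwise; intros. unfold madj, kron. apply Cconj_mul. Qed.

Lemma kron_proper (m n : nat) (A A' B B' : Mat) :
  meq m A A' -> meq n B B' -> meq (m * n) (kron n A B) (kron n A' B').
Proof.
  intros HA HB i j Hi Hj. unfold kron.
  rewrite HA by (eapply div_lt_prod; eauto). rewrite HB by (eapply mod_lt_prod; eauto). auto.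
Qed.

Lemma kron_mI (m n : nat) : meq (m * n) (kron n mI mI) mI.
Proof.
  intros i j Hi Hj. unfold kron, mI.
  assert (Hn : n <> 0%nat) by (intros ->; lia).
  destruct (Nat.eqb_spec i j) as [->|Hij].
  - rewrite !Nat.eqb_refl. ring.
  - destruct (Nat.eqb_spec (i / n) (j / n)), (Nat.eqb_spec (i mod n) (j mod n)); try ring.
    exfalso. apply Hij. rewrite (Nat.div_mod i n), (Nat.div_mod j n) by auto. lia.
Qed.

Lemma kron_conj (m n : nat) (A B X Y : Mat) :
  meq (m * n) (mmul (m * n) (mmul (m * n) (kron n A B) (kron n X Y)) (madj (kron n A B)))
              (kron n (mmul m (mmul m A X) (madj A)) (mmul n (mmul n B Y) (madj B))).
Proof. rewrite kron_mixed, kron_madj, kron_mixed. reflexivity. Qed.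

Lemma ptrace2_proper (m n : nat) (M M' : Mat) :
  meq (m * n) M M' -> meq m (ptrace2 n M) (ptrace2 n M').
Proof. intros H i j Hi Hj. unfold ptrace2. apply csum_ext; intros. apply H; nia. Qed.

Lemma csum_reorder5 (nk nc ne na nb : nat) (F : nat -> nat -> nat -> nat -> nat -> Cplx) :
  csum nk (fun k => csum nc (fun c => csum ne (fun e => csum na (fun a => csum nb (fun b => F k c e a b))))) =
  csum na (fun a => csum nc (fun c => csum nb (fun b => csum ne (fun e => csum nk (fun k => F k c e a b))))).
Proof.
  transitivity (csum nc (fun c => csum ne (fun e => csum na (fun a => csum nb (fun b => csum nk (fun k => F k c e a b)))))).
  { rewrite csum_swap. apply csum_ext; intros. rewrite csum_swap. apply csum_ext; intros.
    rewrite csum_swap. apply csum_ext; intros. rewrite csum_swap. reflexivity. }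
  transitivity (csum nc (fun c => csum na (fun a => csum nb (fun b => csum ne (fun e => csum nk (fun k => F k c e a b)))))).
  { apply csum_ext; intros. rewrite csum_swap. apply csum_ext; intros. rewrite csum_swap. reflexivity. }
  rewrite csum_swap. reflexivity.
Qed.

Lemma ptrace2_conj_kron (m n : nat) (V W M : Mat) :
  meq n (mmul n (madj W) W) mI ->
  meq m (ptrace2 n (mmul (m * n) (mmul (m * n) (kron n V W) M) (madj (kron n V W))))
        (mmul m (mmul m V (ptrace2 n M)) (madj V)).
Proof.
  intros HW i j Hi Hj. unfold ptrace2.
  transitivity (csum m (fun a => csum m (fun c => csum n (fun b => csum n (fun e =>
     Cmul (Cmul (Cmul (V i a) (M (a*n+b)%nat (c*n+e)%nat)) (Cconj (V j c)))
          (csum n (fun k => Cmul (Cconj (W k e)) (W k b)))))))).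
  - transitivity (csum n (fun k => csum m (fun c => csum n (fun e => csum m (fun a => csum n (fun b =>
       Cmul (Cmul (Cmul (V i a) (M (a*n+b)%nat (c*n+e)%nat)) (Cconj (V j c)))
            (Cmul (Cconj (W k e)) (W k b)))))))).
    + unfold mmul, madj, kron.
      apply csum_ext; intros k Hk. rewrite csum_prod_index. apply csum_ext; intros c Hc.
      apply csum_ext; intros e He. rewrite <- csum_mulr, csum_prod_index.
      apply csum_ext; intros a Ha. apply csum_ext; intros b Hb.
      destruct (divmod_pair n i k Hk) as [-> ->]. destruct (divmod_pair n j k Hk) as [-> ->].
      destruct (divmod_pair n a b Hb) as [-> ->]. destruct (divmod_pair n c e He) as [-> ->].
      rewrite Cconj_mul. ring.
    + rewrite csum_reorder5. apply csum_ext; intros a Ha. apply csum_ext; intros c Hc.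
      apply csum_ext; intros b Hb. apply csum_ext; intros e He. apply csum_mull.
  - unfold mmul, madj. rewrite csum_swap. apply csum_ext; intros c Hc.
    rewrite <- csum_mulr. apply csum_ext; intros a Ha.
    rewrite <- csum_mull, <- csum_mulr. apply csum_ext; intros b Hb.
    transitivity (csum n (fun e => if Nat.eqb e b then
        Cmul (Cmul (V i a) (M (a*n+b)%nat (c*n+e)%nat)) (Cconj (V j c)) else C0)).
    + apply csum_ext; intros e He. specialize (HW e b He Hb). unfold mmul, madj, mI in HW.
      rewrite HW. destruct (Nat.eqb_spec e b); ring.
    + rewrite csum_delta by auto. ring.
Qed.

(** * Limits of complex and matrix sequences *)

Definition Ccv (f : nat -> Cplx) (l : Cplx) : Prop :=
  Un_cv (fun N => re (f N)) (re l) /\ Un_cv (fun N => im (f N)) (im l).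

Lemma Un_cv_const (c : R) : Un_cv (fun _ => c) c.
Proof. intros e He. exists O. intros. unfold Rdist. rewrite Rminus_diag, Rabs_R0. lra. Qed.

Lemma Ccv_const (c : Cplx) : Ccv (fun _ => c) c.
Proof. split; apply Un_cv_const. Qed.

Lemma Ccv_ext (f g : nat -> Cplx) (l : Cplx) : (forall N, f N = g N) -> Ccv f l -> Ccv g l.
Proof. intros H [H1 H2]. split; eapply Un_cv_ext; eauto; intros; simpl; rewrite H; auto. Qed.

Lemma Ccv_add (f g : nat -> Cplx) (a b : Cplx) :
  Ccv f a -> Ccv g b -> Ccv (fun N => Cadd (f N) (g N)) (Cadd a b).
Proof. intros [H1 H2] [H3 H4]. split; simpl; apply CV_plus; auto. Qed.

Lemma Ccv_mul (f g : nat -> Cplx) (a b : Cplx) :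
  Ccv f a -> Ccv g b -> Ccv (fun N => Cmul (f N) (g N)) (Cmul a b).
Proof.
  intros [H1 H2] [H3 H4]. split; simpl.
  - apply CV_minus; apply CV_mult; auto.
  - apply CV_plus; apply CV_mult; auto.
Qed.

Lemma Ccv_conj (f : nat -> Cplx) (a : Cplx) : Ccv f a -> Ccv (fun N => Cconj (f N)) (Cconj a).
Proof.
  intros [H1 H2]. split; simpl; auto.
  apply (Un_cv_ext (opp_seq (fun N => im (f N)))); [reflexivity | apply CV_opp; auto].
Qed.

Lemma Ccv_csum (n : nat) (f : nat -> nat -> Cplx) (l : nat -> Cplx) :
  (forall k, (k < n)%nat -> Ccv (fun N => f N k) (l k)) ->
  Ccv (fun N => csum n (f N)) (csum n l).
Proof. induction n; intros H; simpl; [apply Ccv_const | apply Ccv_add; auto]. Qed.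

Lemma Ccv_unique (f : nat -> Cplx) (a b : Cplx) : Ccv f a -> Ccv f b -> a = b.
Proof. intros [H1 H2] [H3 H4]. apply Cplx_ext; eapply UL_sequence; eauto. Qed.

(* Equivalent to the modulus, and avoids square roots. *)
Definition Cnorm (z : Cplx) : R := Rabs (re z) + Rabs (im z).

Lemma Cnorm_ge0 (z : Cplx) : 0 <= Cnorm z.
Proof. unfold Cnorm. pose proof (Rabs_pos (re z)); pose proof (Rabs_pos (im z)); lra. Qed.

Lemma Cnorm_add (a b : Cplx) : Cnorm (Cadd a b) <= Cnorm a + Cnorm b.
Proof.
  unfold Cnorm; simpl. pose proof (Rabs_triang (re a) (re b)); pose proof (Rabs_triang (im a) (im b)); lra.
Qed.

Lemma Cnorm_mul (a b : Cplx) : Cnorm (Cmul a b) <= Cnorm a * Cnorm b.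
Proof.
  unfold Cnorm; simpl.
  pose proof (Rabs_triang (re a * re b) (- (im a * im b))) as H1.
  pose proof (Rabs_triang (re a * im b) (im a * re b)) as H2.
  rewrite Rabs_Ropp in H1. rewrite !Rabs_mult in H1, H2.
  unfold Rminus. pose proof (Rabs_pos (re a)); pose proof (Rabs_pos (im a)).
  pose proof (Rabs_pos (re b)); pose proof (Rabs_pos (im b)). nra.
Qed.

Lemma Cnorm_opp (z : Cplx) : Cnorm (Copp z) = Cnorm z.
Proof. unfold Cnorm; simpl. rewrite !Rabs_Ropp. auto. Qed.

Lemma Cnorm_RtoC_mul (r : R) (z : Cplx) : Cnorm (Cmul (RtoC r) z) = Rabs r * Cnorm z.
Proof.
  unfold Cnorm; simpl. replace (r * re z - 0 * im z) with (r * re z) by ring.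
  replace (r * im z + 0 * re z) with (r * im z) by ring. rewrite !Rabs_mult. ring.
Qed.

Lemma Rabs_re_le_Cnorm (z : Cplx) : Rabs (re z) <= Cnorm z.
Proof. unfold Cnorm. pose proof (Rabs_pos (im z)). lra. Qed.
Lemma Rabs_im_le_Cnorm (z : Cplx) : Rabs (im z) <= Cnorm z.
Proof. unfold Cnorm. pose proof (Rabs_pos (re z)). lra. Qed.

Lemma Cnorm_csum_le_const (n : nat) (f : nat -> Cplx) (c : R) :
  (forall k, (k < n)%nat -> Cnorm (f k) <= c) -> Cnorm (csum n f) <= INR n * c.
Proof.
  induction n as [|n IH]; intros H; simpl csum. { unfold Cnorm; simpl; rewrite Rabs_R0; lra. }
  eapply Rle_trans. apply Cnorm_add. rewrite S_INR.
  assert (Cnorm (csum n f) <= INR n * c) by (apply IH; intros; apply H; lia).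
  assert (Cnorm (f n) <= c) by (apply H; lia). lra.
Qed.

Lemma Cnorm_csum_le_re (n : nat) (f g : nat -> Cplx) :
  (forall k, (k < n)%nat -> Cnorm (f k) <= re (g k)) -> Cnorm (csum n f) <= re (csum n g).
Proof.
  induction n as [|n IH]; intros H; simpl. { unfold Cnorm; simpl; rewrite Rabs_R0; lra. }
  eapply Rle_trans. apply Cnorm_add.
  assert (Cnorm (csum n f) <= re (csum n g)) by (apply IH; intros; apply H; lia).
  assert (Cnorm (f n) <= re (g n)) by (apply H; lia). lra.
Qed.

Lemma Ccv_0_of_Cnorm_le (f : nat -> Cplx) (g : nat -> R) :
  (forall N, Cnorm (f N) <= g N) -> Un_cv g 0 -> Ccv f C0.
Proof.
  intros H Hg. split; intros e He; destruct (Hg e He) as [N HN]; exists N; intros n Hn;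
  specialize (HN n Hn); specialize (H n); unfold Rdist in *; simpl; rewrite Rminus_0_r in *;
  unfold Cnorm in H; pose proof (Rabs_pos (re (f n))); pose proof (Rabs_pos (im (f n)));
  pose proof (Rle_abs (g n)); lra.
Qed.

Lemma Ccv_of_diff (f g : nat -> Cplx) (l : Cplx) :
  Ccv (fun N => Cadd (f N) (Copp (g N))) C0 -> Ccv g l -> Ccv f l.
Proof.
  intros H1 H2. replace l with (Cadd C0 l) by ring.
  eapply Ccv_ext. 2: apply (Ccv_add _ _ _ _ H1 H2). intros; simpl. ring.
Qed.

Definition Mcv (d : nat) (F : nat -> Mat) (E : Mat) : Prop :=
  forall i j, (i < d)%nat -> (j < d)%nat -> Ccv (fun N => F N i j) (E i j).

Lemma Mcv_unique (d : nat) (F : nat -> Mat) (E E' : Mat) : Mcv d F E -> Mcv d F E' -> meq d E E'.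
Proof. intros H1 H2 i j Hi Hj. eapply Ccv_unique; eauto. Qed.

Lemma Mcv_ext (d : nat) (F G : nat -> Mat) (E : Mat) :
  (forall N, meq d (F N) (G N)) -> Mcv d F E -> Mcv d G E.
Proof. intros H H1 i j Hi Hj. eapply Ccv_ext. 2: apply H1; auto. intros; apply H; auto. Qed.

Lemma Mcv_proper (d : nat) (F : nat -> Mat) (E E' : Mat) : meq d E E' -> Mcv d F E -> Mcv d F E'.
Proof. intros H H1 i j Hi Hj. rewrite <- H by auto. auto. Qed.

Lemma Mcv_const (d : nat) (A : Mat) : Mcv d (fun _ => A) A.
Proof. intros i j _ _. apply Ccv_const. Qed.

Lemma Mcv_mmul (d : nat) (F G : nat -> Mat) (E E' : Mat) :
  Mcv d F E -> Mcv d G E' -> Mcv d (fun N => mmul d (F N) (G N)) (mmul d E E').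
Proof. intros H1 H2 i j Hi Hj. unfold mmul. apply Ccv_csum; intros. apply Ccv_mul; auto. Qed.

Lemma Mcv_madj (d : nat) (F : nat -> Mat) (E : Mat) : Mcv d F E -> Mcv d (fun N => madj (F N)) (madj E).
Proof. intros H1 i j Hi Hj. unfold madj. apply Ccv_conj; auto. Qed.

Lemma Mcv_kron_l (m n : nat) (F : nat -> Mat) (E B : Mat) :
  Mcv m F E -> Mcv (m * n) (fun N => kron n (F N) B) (kron n E B).
Proof.
  intros H i j Hi Hj. unfold kron. apply Ccv_mul; [apply H; eapply div_lt_prod; eauto | apply Ccv_const].
Qed.
Lemma Mcv_kron_r (m n : nat) (F : nat -> Mat) (E A : Mat) :
  Mcv n F E -> Mcv (m * n) (fun N => kron n A (F N)) (kron n A E).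
Proof.
  intros H i j Hi Hj. unfold kron. apply Ccv_mul; [apply Ccv_const | apply H; eapply mod_lt_prod; eauto].
Qed.

(** * The matrix exponential *)

Lemma mpow_proper (d : nat) (A A' : Mat) (k : nat) : meq d A A' -> meq d (mpow d A k) (mpow d A' k).
Proof. intros H. induction k; simpl; [reflexivity | rewrite IHk, H; reflexivity]. Qed.

Lemma mpow_intertwine (d : nat) (A B C : Mat) (k : nat) :
  meq d (mmul d C A) (mmul d B C) -> meq d (mmul d C (mpow d A k)) (mmul d (mpow d B k) C).
Proof.
  intros H. induction k; simpl.
  - rewrite mmul_mI_l, mmul_mI_r. reflexivity.
  - rewrite <- mmul_assoc, IHk, mmul_assoc, H, <- mmul_assoc. reflexivity.
Qed.

Lemma mpow_madj (d : nat) (A : Mat) (k : nat) : meq d (mpow d (madj A) k) (madj (mpow d A k)).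
Proof.
  induction k; simpl; [symmetry; apply madj_mI |].
  rewrite madj_mmul, IHk, <- !madj_mmul.
  apply madj_proper, mpow_intertwine. reflexivity.
Qed.

Definition exp_term (d : nat) (A : Mat) (k : nat) : Mat := mscale (RtoC (/ INR (fact k))) (mpow d A k).

Lemma exp_partial_eq (d : nat) (A : Mat) (N : nat) :
  exp_partial d A N = fun i j => csum (S N) (fun k => exp_term d A k i j).
Proof. reflexivity. Qed.

Lemma is_mexp_Mcv (d : nat) (A E : Mat) : is_mexp d A E <-> Mcv d (exp_partial d A) E.
Proof. unfold is_mexp, Mcv, Ccv. tauto. Qed.

Lemma exp_partial_proper (d : nat) (A A' : Mat) (N : nat) :
  meq d A A' -> meq d (exp_partial d A N) (exp_partial d A' N).
Proof.
  intros H i j Hi Hj. unfold exp_partial. apply csum_ext; intros.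
  rewrite (mpow_proper d A A' k H i j Hi Hj). auto.
Qed.

Lemma is_mexp_proper (d : nat) (A A' E E' : Mat) :
  meq d A A' -> meq d E E' -> is_mexp d A E -> is_mexp d A' E'.
Proof.
  rewrite !is_mexp_Mcv. intros HA HE H.
  eapply Mcv_proper; eauto. eapply Mcv_ext; eauto. intros; apply exp_partial_proper; auto.
Qed.

Lemma is_mexp_unique (d : nat) (A E E' : Mat) : is_mexp d A E -> is_mexp d A E' -> meq d E E'.
Proof. rewrite !is_mexp_Mcv. apply Mcv_unique. Qed.

Lemma mexp_intertwine (d : nat) (A B C EA EB : Mat) :
  meq d (mmul d C A) (mmul d B C) -> is_mexp d A EA -> is_mexp d B EB ->
  meq d (mmul d C EA) (mmul d EB C).
Proof.
  rewrite !is_mexp_Mcv. intros H HA HB.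
  apply (Mcv_unique d (fun N => mmul d C (exp_partial d A N))).
  - apply Mcv_mmul; auto. apply Mcv_const.
  - eapply Mcv_ext. 2: apply (Mcv_mmul _ _ _ _ _ HB (Mcv_const d C)).
    intros N i j Hi Hj. rewrite !exp_partial_eq, mmul_csum_l, mmul_csum_r.
    apply csum_ext; intros k _. unfold exp_term.
    rewrite (mmul_mscale_r d _ _ _ i j Hi Hj), (mmul_mscale_l d _ _ _ i j Hi Hj).
    unfold mscale. rewrite (mpow_intertwine d A B C k H i j Hi Hj). auto.
Qed.

Lemma mexp_commutes (d : nat) (A C E : Mat) : commutes d C A -> is_mexp d A E -> commutes d C E.
Proof. intros H HE. eapply mexp_intertwine; eauto. Qed.

Lemma is_mexp_madj (d : nat) (A E : Mat) : is_mexp d A E -> is_mexp d (madj A) (madj E).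
Proof.
  rewrite !is_mexp_Mcv. intros H. eapply Mcv_ext. 2: apply Mcv_madj; eauto.
  intros N i j Hi Hj. unfold madj, exp_partial. rewrite Cconj_csum. apply csum_ext; intros.
  pose proof (mpow_madj d A k i j Hi Hj) as X. unfold madj in X.
  rewrite X, Cconj_mul, Cconj_RtoC. auto.
Qed.

Definition exp_coef (x : R) (j : nat) : R := / INR (fact j) * x ^ j.

Fixpoint rsum (n : nat) (f : nat -> R) : R :=
  match n with O => 0 | S m => rsum m f + f m end.

Lemma rsum_ge0 (n : nat) (f : nat -> R) : (forall k, 0 <= f k) -> 0 <= rsum n f.
Proof. intros H; induction n; simpl; [lra | specialize (H n); lra]. Qed.

Lemma rsum_ge_term (n : nat) (f : nat -> R) (k : nat) :
  (forall k, 0 <= f k) -> (k < n)%nat -> f k <= rsum n f.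
Proof.
  intros H; induction n; intros Hk; simpl; [lia|].
  destruct (Nat.eq_dec k n) as [->|Hne].
  - pose proof (rsum_ge0 n f H). lra.
  - assert (f k <= rsum n f) by (apply IHn; lia). specialize (H n). lra.
Qed.

Definition mbound (d : nat) (A : Mat) : R := rsum d (fun i => rsum d (fun j => Cnorm (A i j))).

Lemma Cnorm_le_mbound (d : nat) (A : Mat) (i j : nat) :
  (i < d)%nat -> (j < d)%nat -> Cnorm (A i j) <= mbound d A.
Proof.
  intros Hi Hj. unfold mbound. eapply Rle_trans.
  2: apply (rsum_ge_term d (fun i => rsum d (fun j => Cnorm (A i j))) i); auto.
  - apply (rsum_ge_term d (fun j => Cnorm (A i j))); auto. intros; apply Cnorm_ge0.
  - intros; apply rsum_ge0; intros; apply Cnorm_ge0.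
Qed.

Lemma Cnorm_mI (i j : nat) : Cnorm (mI i j) <= 1.
Proof. unfold mI. destruct (Nat.eqb i j); unfold Cnorm; simpl; rewrite ?Rabs_R0, ?Rabs_R1; lra. Qed.

Lemma Cnorm_mpow_le (d : nat) (A : Mat) (k i j : nat) : (i < d)%nat -> (j < d)%nat ->
  Cnorm (mpow d A k i j) <= (INR d * mbound d A) ^ k.
Proof.
  revert i j; induction k; intros i j Hi Hj; simpl mpow; [apply Cnorm_mI |].
  rewrite <- tech_pow_Rmult. unfold mmul. eapply Rle_trans.
  - apply (Cnorm_csum_le_const _ _ ((INR d * mbound d A) ^ k * mbound d A)).
    intros l Hl. eapply Rle_trans; [apply Cnorm_mul |].
    apply Rmult_le_compat; try apply Cnorm_ge0; auto using Cnorm_le_mbound.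
  - lra.
Qed.

Lemma Cnorm_exp_term_le (d : nat) (A : Mat) (k i j : nat) : (i < d)%nat -> (j < d)%nat ->
  Cnorm (exp_term d A k i j) <= exp_coef (INR d * mbound d A) k.
Proof.
  intros. unfold exp_term, exp_coef, mscale. rewrite Cnorm_RtoC_mul.
  assert (0 < / INR (fact k)) by apply Rinv_0_lt_compat, INR_fact_lt_0.
  rewrite Rabs_pos_eq by lra. apply Rmult_le_compat_l; [lra | apply Cnorm_mpow_le; auto].
Qed.

Lemma exp_series_cv (x : R) : Un_cv (fun N => sum_f_R0 (exp_coef x) N) (exp x).
Proof. unfold exp. destruct (exist_exp x) as [l Hl]. exact Hl. Qed.

Lemma series_cv_of_exp_bound (x : nat -> R) (a : R) :
  (forall k, Rabs (x k) <= exp_coef a k) -> { l | Un_cv (fun N => sum_f_R0 x N) l }.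
Proof.
  intros H. apply cv_cauchy_2, cauchy_abs, CV_Cauchy.
  apply (Rseries_CV_comp _ (exp_coef a)).
  - intros; split; auto. apply Rabs_pos.
  - exists (exp a). apply exp_series_cv.
Qed.

Lemma exp_partial_entry_cv (d : nat) (A : Mat) (i j : nat) : (i < d)%nat -> (j < d)%nat ->
  { l | Ccv (fun N => exp_partial d A N i j) l }.
Proof.
  intros Hi Hj.
  destruct (series_cv_of_exp_bound (fun k => re (exp_term d A k i j)) (INR d * mbound d A)) as [lr Hr].
  { intros. eapply Rle_trans; [apply Rabs_re_le_Cnorm | apply Cnorm_exp_term_le; auto]. }
  destruct (series_cv_of_exp_bound (fun k => im (exp_term d A k i j)) (INR d * mbound d A)) as [li Hli].
  { intros. eapply Rle_trans; [apply Rabs_im_le_Cnorm | apply Cnorm_exp_term_le; auto]. }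
  exists (mkC lr li). split; cbn [re im].
  - eapply Un_cv_ext; [| apply Hr]. intros. rewrite exp_partial_eq, re_csum_S. reflexivity.
  - eapply Un_cv_ext; [| apply Hli]. intros. rewrite exp_partial_eq, im_csum_S. reflexivity.
Qed.

Lemma mexp_exists (d : nat) (A : Mat) : exists E, is_mexp d A E.
Proof.
  exists (fun i j => match lt_dec i d, lt_dec j d with
                  | left Hi, left Hj => proj1_sig (exp_partial_entry_cv d A i j Hi Hj)
                  | _, _ => C0 end).
  apply is_mexp_Mcv. intros i j Hi Hj.
  destruct (lt_dec i d) as [Hi'|]; [|lia]. destruct (lt_dec j d) as [Hj'|]; [|lia].
  exact (proj2_sig (exp_partial_entry_cv d A i j Hi' Hj')).
Qed.

(** * The product formula for commuting exponents *)

Lemma exp_term_succ (d : nat) (A : Mat) (j : nat) :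
  meq d (mmul d (exp_term d A j) A) (mscale (RtoC (INR (S j))) (exp_term d A (S j))).
Proof.
  assert (Hfact : INR (S j) * / INR (fact (S j)) = / INR (fact j)).
  { rewrite fact_simpl, mult_INR. pose proof (INR_fact_lt_0 j).
    pose proof (lt_0_INR (S j) ltac:(lia)). field. lra. }
  unfold exp_term. rewrite mmul_mscale_l. intros i k Hi Hk. unfold mscale. simpl mpow.
  rewrite <- Hfact, RtoC_mul. ring.
Qed.

Lemma exp_term_0 (d : nat) (A : Mat) : exp_term d A 0 = mscale C1 mI.
Proof. unfold exp_term. simpl. rewrite Rinv_1. reflexivity. Qed.

Lemma exp_term_commutes (d : nat) (A B : Mat) (j : nat) :
  commutes d A B -> meq d (mmul d A (exp_term d B j)) (mmul d (exp_term d B j) A).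
Proof.
  intros H. unfold exp_term. rewrite mmul_mscale_l, mmul_mscale_r.
  apply mscale_proper, mpow_intertwine, H.
Qed.

Definition cauchy_term (d : nat) (A B : Mat) (n : nat) : Mat :=
  fun i k => csum (S n) (fun j => mmul d (exp_term d A j) (exp_term d B (n - j)) i k).

Lemma csum_weight_split (n : nat) (X : nat -> Cplx) :
  Cmul (RtoC (INR (S n))) (csum (S (S n)) X) =
  Cadd (csum (S n) (fun j => Cmul (RtoC (INR (S j))) (X (S j))))
       (csum (S n) (fun j => Cmul (RtoC (INR (S n - j))) (X j))).
Proof.
  transitivity (Cadd (csum (S (S n)) (fun j => Cmul (RtoC (INR j)) (X j)))
                     (csum (S (S n)) (fun j => Cmul (RtoC (INR (S n - j))) (X j)))).
  - rewrite <- csum_mull, <- csum_add. apply csum_ext; intros.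
    replace (INR (S n)) with (INR k + INR (S n - k)) by (rewrite minus_INR by lia; ring).
    rewrite RtoC_add. ring.
  - f_equal.
    + rewrite csum_first. simpl INR at 1. Csolve.
    + change (csum (S (S n)) ?f) with (Cadd (csum (S n) f) (f (S n))).
      cbv beta. rewrite Nat.sub_diag. simpl INR. Csolve.
Qed.

Lemma cauchy_term_succ (d : nat) (A B : Mat) (n : nat) : commutes d A B ->
  meq d (mscale (RtoC (INR (S n))) (cauchy_term d A B (S n))) (mmul d (cauchy_term d A B n) (madd A B)).
Proof.
  intros HAB i k Hi Hk.
  assert (HA : forall j, meq d (mmul d (mmul d (exp_term d A j) (exp_term d B (n - j))) A)
        (mscale (RtoC (INR (S j))) (mmul d (exp_term d A (S j)) (exp_term d B (n - j))))).
  { intros j. rewrite mmul_assoc, <- (exp_term_commutes d A B (n - j) HAB).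
    rewrite <- mmul_assoc, exp_term_succ, mmul_mscale_l. reflexivity. }
  assert (HB : forall j, meq d (mmul d (mmul d (exp_term d A j) (exp_term d B (n - j))) B)
        (mscale (RtoC (INR (S (n - j)))) (mmul d (exp_term d A j) (exp_term d B (S (n - j)))))).
  { intros j. rewrite mmul_assoc, exp_term_succ, mmul_mscale_r. reflexivity. }
  unfold mscale at 1, cauchy_term at 1. rewrite csum_weight_split.
  rewrite (mmul_madd_r d _ _ _ i k Hi Hk). unfold madd. f_equal.
  - unfold cauchy_term. rewrite mmul_csum_l. apply csum_ext; intros j Hj.
    symmetry. etransitivity; [apply (HA j i k Hi Hk) | reflexivity].
  - unfold cauchy_term. rewrite mmul_csum_l. apply csum_ext; intros j Hj.
    symmetry. etransitivity; [apply (HB j i k Hi Hk) |].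
    unfold mscale. replace (S n - j)%nat with (S (n - j)) by lia. reflexivity.
Qed.

Lemma cauchy_term_eq (d : nat) (A B : Mat) (n : nat) : commutes d A B ->
  meq d (cauchy_term d A B n) (exp_term d (madd A B) n).
Proof.
  intros HAB. induction n as [|n IH]; intros i k Hi Hk.
  - unfold cauchy_term. simpl csum. rewrite !exp_term_0.
    rewrite (mmul_mscale_l d _ _ _ i k Hi Hk). unfold mscale at 1.
    rewrite (mmul_mscale_r d _ _ _ i k Hi Hk). unfold mscale.
    rewrite (mmul_mI_l d mI i k Hi Hk). ring.
  - assert (Hinv : forall z, Cmul (RtoC (/ INR (S n))) (Cmul (RtoC (INR (S n))) z) = z).
    { intros z. rewrite Cring_theory.(Rmul_assoc), <- RtoC_mul, Rinv_l by (apply not_0_INR; lia).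
      Csolve. }
    rewrite <- (Hinv (cauchy_term d A B (S n) i k)), <- (Hinv (exp_term d (madd A B) (S n) i k)).
    f_equal. change (Cmul _ (cauchy_term d A B (S n) i k))
      with (mscale (RtoC (INR (S n))) (cauchy_term d A B (S n)) i k).
    rewrite (cauchy_term_succ d A B n HAB i k Hi Hk).
    rewrite (mmul_proper d _ _ IH (madd A B) (madd A B) ltac:(reflexivity) i k Hi Hk).
    apply (exp_term_succ d (madd A B) n i k Hi Hk).
Qed.

Lemma csum_trunc (N M : nat) (f : nat -> Cplx) : (N <= M)%nat ->
  csum M (fun j => if (j <? N)%nat then f j else C0) = csum N f.
Proof.
  intros H. replace M with (N + (M - N))%nat by lia. rewrite csum_split.
  rewrite (csum_eq0 (M - N)), (csum_ext N _ f); [ring | |].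
  - intros. destruct (Nat.ltb_spec k N); auto; lia.
  - intros. destruct (Nat.ltb_spec (N + k) N); auto; lia.
Qed.

Lemma csum_triangle (g : nat -> nat -> Cplx) (N M : nat) : (N <= S M)%nat ->
  csum N (fun n => csum (S n) (fun j => g j (n - j)%nat)) =
  csum (S M) (fun j => csum (S M) (fun l => if (j + l <? N)%nat then g j l else C0)).
Proof.
  induction N as [|N IH]; intros HN.
  - symmetry. apply csum_eq0; intros. apply csum_eq0; intros. auto.
  - change (csum (S N) ?f) with (Cadd (csum N f) (f N)). rewrite IH by lia.
    transitivity (Cadd (csum (S M) (fun j => csum (S M) (fun l => if (j + l <? N)%nat then g j l else C0)))
        (csum (S M) (fun j => csum (S M) (fun l => if (j + l =? N)%nat then g j l else C0)))).
    + f_equal. rewrite <- (csum_trunc (S N) (S M) (fun j => g j (N - j)%nat)) by lia.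
      apply csum_ext; intros j Hj. destruct (Nat.ltb_spec j (S N)).
      * rewrite <- (csum_delta (S M) (N - j) (fun l => g j l)) by lia.
        apply csum_ext; intros l Hl. destruct (Nat.eqb_spec (j + l) N), (Nat.eqb_spec l (N - j)); auto; lia.
      * symmetry; apply csum_eq0; intros l Hl. destruct (Nat.eqb_spec (j + l) N); auto; lia.
    + rewrite <- csum_add. apply csum_ext; intros j Hj. rewrite <- csum_add. apply csum_ext; intros l Hl.
      destruct (Nat.ltb_spec (j + l) N), (Nat.eqb_spec (j + l) N), (Nat.ltb_spec (j + l) (S N)); try lia; ring.
Qed.

Lemma exp_partial_mul_sub (d : nat) (A B : Mat) (N i k : nat) :
  commutes d A B -> (i < d)%nat -> (k < d)%nat ->
  Cadd (mmul d (exp_partial d A N) (exp_partial d B N) i k) (Copp (exp_partial d (madd A B) N i k))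
  = csum (S N) (fun j => csum (S N) (fun l =>
      if (j + l <? S N)%nat then C0 else mmul d (exp_term d A j) (exp_term d B l) i k)).
Proof.
  intros HAB Hi Hk.
  assert (Hprod : mmul d (exp_partial d A N) (exp_partial d B N) i k =
      csum (S N) (fun j => csum (S N) (fun l => mmul d (exp_term d A j) (exp_term d B l) i k))).
  { rewrite !exp_partial_eq, mmul_csum_l. apply csum_ext; intros. apply mmul_csum_r. }
  assert (Hsum : exp_partial d (madd A B) N i k =
      csum (S N) (fun j => csum (S N) (fun l =>
        if (j + l <? S N)%nat then mmul d (exp_term d A j) (exp_term d B l) i k else C0))).
  { rewrite <- csum_triangle by lia. rewrite exp_partial_eq. apply csum_ext; intros n Hn.
    rewrite <- (cauchy_term_eq d A B n HAB i k Hi Hk). reflexivity. }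
  rewrite Hprod, Hsum, <- csum_opp, <- csum_add. apply csum_ext; intros j Hj.
  rewrite <- csum_opp, <- csum_add. apply csum_ext; intros l Hl.
  destruct (j + l <? S N)%nat; ring.
Qed.

Definition scalar1 (x : R) : Mat := fun _ _ => RtoC x.

Lemma exp_term_scalar1 (x : R) (j : nat) : exp_term 1 (scalar1 x) j O O = RtoC (exp_coef x j).
Proof.
  assert (Hpow : mpow 1 (scalar1 x) j O O = RtoC (x ^ j)).
  { induction j as [|j IH]; [reflexivity|]. simpl mpow. unfold mmul. simpl csum. rewrite IH.
    unfold scalar1. Csolve. }
  unfold exp_term, exp_coef, mscale. rewrite Hpow, RtoC_mul. reflexivity.
Qed.

Lemma exp_partial_scalar1 (x : R) (N : nat) :
  exp_partial 1 (scalar1 x) N O O = RtoC (sum_f_R0 (exp_coef x) N).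
Proof.
  rewrite exp_partial_eq. apply Cplx_ext.
  - rewrite re_csum_S. apply sum_eq; intros. rewrite exp_term_scalar1. reflexivity.
  - rewrite im_csum_S, (sum_eq _ (fun _ => 0)) by (intros; rewrite exp_term_scalar1; reflexivity).
    simpl. clear. induction N; simpl; [reflexivity | rewrite IHN; ring].
Qed.

(* The Cauchy-product tail of [A] and [B] is dominated, termwise, by the one of the 1x1
   matrices [x] and [y] with x, y the entry bounds; for those the tail is explicit in terms of
   the partial sums of [exp x], [exp y] and [exp (x + y)]. *)
Lemma exp_partial_mul_sub_bound (d : nat) (A B : Mat) (N i k : nat) :
  commutes d A B -> (i < d)%nat -> (k < d)%nat ->
  Cnorm (Cadd (mmul d (exp_partial d A N) (exp_partial d B N) i k) (Copp (exp_partial d (madd A B) N i k)))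
  <= INR d * (sum_f_R0 (exp_coef (INR d * mbound d A)) N * sum_f_R0 (exp_coef (INR d * mbound d B)) N
              - sum_f_R0 (exp_coef (INR d * mbound d A + INR d * mbound d B)) N).
Proof.
  intros HAB Hi Hk. set (x := INR d * mbound d A). set (y := INR d * mbound d B).
  assert (Hxy : commutes 1 (scalar1 x) (scalar1 y)).
  { intros a b _ _. unfold mmul, scalar1. simpl. Csolve. }
  pose proof (exp_partial_mul_sub 1 (scalar1 x) (scalar1 y) N O O Hxy ltac:(lia) ltac:(lia)) as Hscal.
  assert (Hsum : exp_partial 1 (madd (scalar1 x) (scalar1 y)) N O O = exp_partial 1 (scalar1 (x + y)) N O O).
  { apply exp_partial_proper; try lia. intros a b _ _. unfold madd, scalar1. rewrite RtoC_add. auto. }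
  rewrite Hsum, !exp_partial_scalar1 in Hscal.
  rewrite (exp_partial_mul_sub d A B N i k HAB Hi Hk). eapply Rle_trans.
  - apply (Cnorm_csum_le_re _ _ (fun j => Cmul (RtoC (INR d)) (csum (S N) (fun l =>
      if (j + l <? S N)%nat then C0 else mmul 1 (exp_term 1 (scalar1 x) j) (exp_term 1 (scalar1 y) l) O O)))).
    intros j Hj. rewrite <- csum_mull. apply Cnorm_csum_le_re. intros l Hl.
    destruct (j + l <? S N)%nat.
    + unfold Cnorm; simpl; rewrite Rabs_R0; lra.
    + unfold mmul at 2. simpl csum. rewrite !exp_term_scalar1. simpl re.
      unfold mmul. eapply Rle_trans; [apply (Cnorm_csum_le_const _ _ (exp_coef x j * exp_coef y l)) |].
      * intros m Hm. eapply Rle_trans; [apply Cnorm_mul |].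
        apply Rmult_le_compat; try apply Cnorm_ge0; apply Cnorm_exp_term_le; auto.
      * unfold exp_coef. right. ring.
  - rewrite csum_mull, <- Hscal. unfold mmul at 1. simpl csum. rewrite !exp_partial_scalar1.
    unfold exp_coef. simpl. right. ring.
Qed.

Lemma mexp_add (d : nat) (A B EA EB : Mat) : commutes d A B -> is_mexp d A EA -> is_mexp d B EB ->
  is_mexp d (madd A B) (mmul d EA EB).
Proof.
  rewrite !is_mexp_Mcv. intros HAB HA HB i k Hi Hk.
  apply (Ccv_of_diff _ (fun N => mmul d (exp_partial d A N) (exp_partial d B N) i k)).
  2: apply Mcv_mmul; auto.
  set (x := INR d * mbound d A). set (y := INR d * mbound d B).
  apply (Ccv_0_of_Cnorm_le _ (fun N =>
    INR d * (sum_f_R0 (exp_coef x) N * sum_f_R0 (exp_coef y) N - sum_f_R0 (exp_coef (x + y)) N))).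
  - intros N. eapply Rle_trans; [| apply (exp_partial_mul_sub_bound d A B N i k HAB Hi Hk)].
    right. rewrite <- Cnorm_opp. f_equal. ring.
  - replace 0 with (INR d * (exp x * exp y - exp (x + y))) by (rewrite exp_plus; ring).
    apply CV_mult; [apply Un_cv_const |].
    apply CV_minus; [apply CV_mult |]; apply exp_series_cv.
Qed.

Lemma mexp_zero (d : nat) (Z : Mat) : meq d Z (fun _ _ => C0) -> is_mexp d Z mI.
Proof.
  intros HZ. rewrite is_mexp_Mcv. apply (Mcv_ext d (fun _ => mI)); [| apply Mcv_const].
  intros N i j Hi Hj. rewrite exp_partial_eq, csum_first, csum_eq0.
  - rewrite exp_term_0. unfold mscale. ring.
  - intros k Hk. unfold exp_term. simpl mpow. unfold mscale.
    rewrite (mmul_proper d _ _ (reflexivity _) _ _ HZ i j Hi Hj). unfold mmul.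
    rewrite csum_eq0; intros; ring.
Qed.

Lemma mpow_kron_mI_r (m n : nat) (A : Mat) (k : nat) :
  meq (m * n) (mpow (m * n) (kron n A mI) k) (kron n (mpow m A k) mI).
Proof.
  induction k; simpl; [symmetry; apply kron_mI |].
  rewrite IHk, kron_mixed. apply kron_proper; [reflexivity | apply mmul_mI_l].
Qed.
Lemma mpow_kron_mI_l (m n : nat) (B : Mat) (k : nat) :
  meq (m * n) (mpow (m * n) (kron n mI B) k) (kron n mI (mpow n B k)).
Proof.
  induction k; simpl; [symmetry; apply kron_mI |].
  rewrite IHk, kron_mixed. apply kron_proper; [apply mmul_mI_l | reflexivity].
Qed.

Lemma mexp_kron_mI_r (m n : nat) (A E : Mat) : is_mexp m A E -> is_mexp (m * n) (kron n A mI) (kron n E mI).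
Proof.
  rewrite !is_mexp_Mcv. intros H. eapply Mcv_ext; [| apply Mcv_kron_l; eauto].
  intros N i j Hi Hj. unfold kron at 1, exp_partial. rewrite <- csum_mulr.
  apply csum_ext; intros k Hk. rewrite (mpow_kron_mI_r m n A k i j Hi Hj). unfold kron. ring.
Qed.
Lemma mexp_kron_mI_l (m n : nat) (B E : Mat) : is_mexp n B E -> is_mexp (m * n) (kron n mI B) (kron n mI E).
Proof.
  rewrite !is_mexp_Mcv. intros H. eapply Mcv_ext; [| apply Mcv_kron_r; eauto].
  intros N i j Hi Hj. unfold kron at 1, exp_partial. rewrite <- csum_mull.
  apply csum_ext; intros k Hk. rewrite (mpow_kron_mI_l m n B k i j Hi Hj). unfold kron. ring.
Qed.

Lemma mexp_kron_sum (m n : nat) (A B EA EB : Mat) : is_mexp m A EA -> is_mexp n B EB ->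
  is_mexp (m * n) (madd (kron n A mI) (kron n mI B)) (kron n EA EB).
Proof.
  intros HA HB.
  apply (is_mexp_proper _ _ _ (mmul (m * n) (kron n EA mI) (kron n mI EB)) _ (reflexivity _)).
  - rewrite kron_mixed. apply kron_proper; [apply mmul_mI_r | apply mmul_mI_l].
  - apply mexp_add; auto using mexp_kron_mI_r, mexp_kron_mI_l.
    unfold commutes. rewrite !kron_mixed.
    apply kron_proper; rewrite mmul_mI_l, mmul_mI_r; reflexivity.
Qed.

(* e^A (e^A)^* = e^(A + A^* ) = e^0 for A skew-adjoint. *)
Lemma mexp_skew_unitary (d : nat) (A E : Mat) :
  meq d (madj A) (mscale (RtoC (-1)) A) -> is_mexp d A E -> unitary d E.
Proof.
  intros HA HE.
  assert (HE' : is_mexp d (mscale (RtoC (-1)) A) (madj E))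
    by (eapply is_mexp_proper; [apply HA | reflexivity | apply is_mexp_madj, HE]).
  assert (Hc : commutes d A (mscale (RtoC (-1)) A)) by (apply commutes_mscale; unfold commutes; reflexivity).
  assert (Hzero : meq d (madd A (mscale (RtoC (-1)) A)) (fun _ _ => C0))
    by (apply meq_pointwise; intros; unfold madd, mscale; Csolve).
  split; apply (is_mexp_unique d (fun _ _ => C0)); try (apply mexp_zero; reflexivity).
  - eapply is_mexp_proper; [apply Hzero | reflexivity | apply mexp_add; auto].
  - eapply is_mexp_proper; [| reflexivity | apply mexp_add; [apply commutes_sym | |]; eauto].
    rewrite <- Hzero. apply meq_pointwise; intros; unfold madd; ring.
Qed.

Lemma evolution_unitary (d : nat) (H E : Mat) (t : R) :
  hermitian d H -> is_mexp d (mscale (mkC 0 (- t)) H) E -> unitary d E.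
Proof.
  intros HH. apply mexp_skew_unitary. unfold hermitian in HH.
  rewrite madj_mscale, HH. apply meq_pointwise; intros. unfold mscale. Csolve.
Qed.

(** * Time averages *)

Lemma time_avg_cv_ext (f g : R -> R) (l : R) :
  (forall t, f t = g t) -> time_avg_cv f l -> time_avg_cv g l.
Proof. intros H. replace g with f; auto. apply functional_extensionality; auto. Qed.

Lemma time_avg_cv_const (c : R) : time_avg_cv (fun _ => c) c.
Proof.
  intros eps He. exists 1. split; [lra|]. intros s Hs.
  exists (RiemannInt_P14 0 s c).
  pose proof (RiemannInt_P15 (RiemannInt_P14 0 s c)) as E. unfold fct_cte in E |- *. rewrite E.
  replace (c * (s - 0) / s - c) with 0 by (field; lra). rewrite Rabs_R0. lra.
Qed.

Lemma time_avg_cv_add_scal (f g : R -> R) (a b l : R) : time_avg_cv f a -> time_avg_cv g b ->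
  time_avg_cv (fun t => f t + l * g t) (a + l * b).
Proof.
  intros Hf Hg eps He.
  set (e' := eps / (2 * (1 + Rabs l))).
  pose proof (Rabs_pos l).
  assert (He' : 0 < e') by (unfold e'; apply Rdiv_lt_0_compat; lra).
  destruct (Hf e' He') as [S1 [HS1 H1]]. destruct (Hg e' He') as [S2 [HS2 H2]].
  exists (Rmax S1 S2). split; [eapply Rlt_le_trans; [apply HS1 | apply Rmax_l] |].
  intros s Hs.
  assert (Hs1 : S1 <= s) by (eapply Rle_trans; [apply Rmax_l | apply Hs]).
  assert (Hs2 : S2 <= s) by (eapply Rle_trans; [apply Rmax_r | apply Hs]).
  destruct (H1 s Hs1) as [pr1 Hp1]. destruct (H2 s Hs2) as [pr2 Hp2].
  exists (RiemannInt_P10 l pr1 pr2). rewrite (RiemannInt_P13 pr1 pr2).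
  replace ((RiemannInt pr1 + l * RiemannInt pr2) / s - (a + l * b)) with
      ((RiemannInt pr1 / s - a) + l * (RiemannInt pr2 / s - b)) by (field; lra).
  eapply Rle_lt_trans; [apply Rabs_triang |]. rewrite Rabs_mult.
  assert (Rabs l * Rabs (RiemannInt pr2 / s - b) <= Rabs l * e')
    by (apply Rmult_le_compat_l; lra).
  assert (e' * (2 * (1 + Rabs l)) = eps) by (unfold e'; field; lra).
  nra.
Qed.

Lemma time_avg_cv_lin (f g : R -> R) (a b p q : R) : time_avg_cv f a -> time_avg_cv g b ->
  time_avg_cv (fun t => p * f t + q * g t) (p * a + q * b).
Proof.
  intros Hf Hg.
  pose proof (time_avg_cv_add_scal _ _ _ _ q (time_avg_cv_add_scal _ _ _ _ p (time_avg_cv_const 0) Hf) Hg) as H.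
  replace (p * a + q * b) with (0 + p * a + q * b) by ring.
  eapply time_avg_cv_ext; [| apply H]. intros; simpl; ring.
Qed.

Lemma time_avg_cv_unique (f : R -> R) (a b : R) : time_avg_cv f a -> time_avg_cv f b -> a = b.
Proof.
  intros Ha Hb. destruct (Req_dec a b) as [|Hne]; auto. exfalso.
  set (eps := Rabs (a - b) / 3).
  assert (He : 0 < eps) by (unfold eps; apply Rdiv_lt_0_compat; [apply Rabs_pos_lt; lra | lra]).
  destruct (Ha eps He) as [S1 [HS1 H1]]. destruct (Hb eps He) as [S2 [HS2 H2]].
  destruct (H1 (Rmax S1 S2) (Rmax_l _ _)) as [pr1 Hp1].
  destruct (H2 (Rmax S1 S2) (Rmax_r _ _)) as [pr2 Hp2].
  rewrite (RiemannInt_P5 pr2 pr1) in Hp2.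
  pose proof (Rabs_triang (RiemannInt pr1 / Rmax S1 S2 - b) (- (RiemannInt pr1 / Rmax S1 S2 - a))) as Htri.
  rewrite Rabs_Ropp in Htri.
  replace (RiemannInt pr1 / Rmax S1 S2 - b + - (RiemannInt pr1 / Rmax S1 S2 - a)) with (a - b) in Htri by ring.
  unfold eps in *. lra.
Qed.

Definition Ctime_avg_cv (F : R -> Cplx) (L : Cplx) : Prop :=
  time_avg_cv (fun t => re (F t)) (re L) /\ time_avg_cv (fun t => im (F t)) (im L).

Lemma Ctime_avg_cv_const (c : Cplx) : Ctime_avg_cv (fun _ => c) c.
Proof. split; apply time_avg_cv_const. Qed.

Lemma Ctime_avg_cv_ext (F G : R -> Cplx) (L : Cplx) :
  (forall t, F t = G t) -> Ctime_avg_cv F L -> Ctime_avg_cv G L.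
Proof. intros H [H1 H2]. split; eapply time_avg_cv_ext; eauto; intros; simpl; rewrite H; auto. Qed.

Lemma Ctime_avg_cv_unique (F : R -> Cplx) (a b : Cplx) : Ctime_avg_cv F a -> Ctime_avg_cv F b -> a = b.
Proof. intros [H1 H2] [H3 H4]. apply Cplx_ext; eapply time_avg_cv_unique; eauto. Qed.

Lemma Ctime_avg_cv_add (F G : R -> Cplx) (a b : Cplx) :
  Ctime_avg_cv F a -> Ctime_avg_cv G b -> Ctime_avg_cv (fun t => Cadd (F t) (G t)) (Cadd a b).
Proof.
  intros [H1 H2] [H3 H4].
  pose proof (time_avg_cv_add_scal _ _ _ _ 1 H1 H3) as Hre.
  pose proof (time_avg_cv_add_scal _ _ _ _ 1 H2 H4) as Him.
  rewrite Rmult_1_l in Hre, Him.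
  split; simpl; eapply time_avg_cv_ext; eauto; intros; simpl; ring.
Qed.

Lemma Ctime_avg_cv_mull (c : Cplx) (F : R -> Cplx) (a : Cplx) :
  Ctime_avg_cv F a -> Ctime_avg_cv (fun t => Cmul c (F t)) (Cmul c a).
Proof.
  intros [H1 H2]. split; simpl.
  - replace (re c * re a - im c * im a) with (re c * re a + - im c * im a) by ring.
    eapply time_avg_cv_ext; [| apply time_avg_cv_lin; eauto]. intros; simpl; ring.
  - eapply time_avg_cv_ext; [| apply (time_avg_cv_lin _ _ _ _ (re c) (im c) H2 H1)].
    intros; simpl; ring.
Qed.

Lemma Ctime_avg_cv_mulr (c : Cplx) (F : R -> Cplx) (a : Cplx) :
  Ctime_avg_cv F a -> Ctime_avg_cv (fun t => Cmul (F t) c) (Cmul a c).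
Proof.
  intros H. replace (Cmul a c) with (Cmul c a) by ring.
  eapply Ctime_avg_cv_ext; [| apply Ctime_avg_cv_mull, H]. intros; simpl; ring.
Qed.

Lemma Ctime_avg_cv_csum (n : nat) (F : R -> nat -> Cplx) (L : nat -> Cplx) :
  (forall k, (k < n)%nat -> Ctime_avg_cv (fun t => F t k) (L k)) ->
  Ctime_avg_cv (fun t => csum n (F t)) (csum n L).
Proof.
  induction n; intros H; simpl; [apply Ctime_avg_cv_const | apply Ctime_avg_cv_add; auto].
Qed.

Definition Mtime_avg_cv (d : nat) (F : R -> Mat) (Y : Mat) : Prop :=
  forall i j, (i < d)%nat -> (j < d)%nat -> Ctime_avg_cv (fun t => F t i j) (Y i j).

Lemma Mtime_avg_cv_mmul_l (d : nat) (A : Mat) (F : R -> Mat) (Y : Mat) :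
  Mtime_avg_cv d F Y -> Mtime_avg_cv d (fun t => mmul d A (F t)) (mmul d A Y).
Proof.
  intros H i j Hi Hj. apply Ctime_avg_cv_csum; intros k Hk. apply Ctime_avg_cv_mull, H; auto.
Qed.

Lemma Mtime_avg_cv_mmul_r (d : nat) (A : Mat) (F : R -> Mat) (Y : Mat) :
  Mtime_avg_cv d F Y -> Mtime_avg_cv d (fun t => mmul d (F t) A) (mmul d Y A).
Proof.
  intros H i j Hi Hj. apply Ctime_avg_cv_csum; intros k Hk. apply Ctime_avg_cv_mulr, H; auto.
Qed.

Lemma Mtime_avg_cv_kron_l (m n : nat) (F : R -> Mat) (Y B : Mat) :
  Mtime_avg_cv m F Y -> Mtime_avg_cv (m * n) (fun t => kron n (F t) B) (kron n Y B).
Proof. intros H i j Hi Hj. apply Ctime_avg_cv_mulr, H; eapply div_lt_prod; eauto. Qed.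

Lemma Mtime_avg_cv_ptrace2 (m n : nat) (F : R -> Mat) (Y : Mat) :
  Mtime_avg_cv (m * n) F Y -> Mtime_avg_cv m (fun t => ptrace2 n (F t)) (ptrace2 n Y).
Proof. intros H i j Hi Hj. apply Ctime_avg_cv_csum; intros k Hk. apply H; nia. Qed.

(** * Thermal operations *)

Lemma thermal_op_time_avg (dX : nat) (HX : Mat) (beta : R) (T : Mat -> Mat) (F : R -> Mat) (Y : Mat) :
  thermal_op dX HX beta T -> Mtime_avg_cv dX F Y -> Mtime_avg_cv dX (fun t => T (F t)) (T Y).
Proof.
  intros (dB & HB & gammaB & U & _ & _ & _ & _ & _ & HT) HF i j Hi Hj.
  eapply Ctime_avg_cv_ext; [intros t; symmetry; apply (HT (F t) i j Hi Hj) |].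
  rewrite (HT Y i j Hi Hj).
  revert i j Hi Hj.
  apply Mtime_avg_cv_ptrace2, Mtime_avg_cv_mmul_r, Mtime_avg_cv_mmul_l, Mtime_avg_cv_kron_l, HF.
Qed.

Lemma gibbs_commutes_mexp (d : nat) (beta : R) (H gamma : Mat) (z : Cplx) (E : Mat) :
  is_gibbs d beta H gamma -> is_mexp d (mscale z H) E -> commutes d gamma E.
Proof.
  intros [EG [HEG Hgamma]] HE.
  assert (HHEG : commutes d H EG).
  { eapply mexp_commutes; eauto. apply commutes_mscale. unfold commutes; reflexivity. }
  assert (HEGE : commutes d EG E).
  { eapply mexp_commutes; eauto. apply commutes_mscale, commutes_sym, HHEG. }
  unfold commutes in *. rewrite Hgamma, mmul_mscale_l, mmul_mscale_r, HEGE. reflexivity.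
Qed.

Lemma mexp_scaled_kron_sum (m n : nat) (z : Cplx) (A B EA EB : Mat) :
  is_mexp m (mscale z A) EA -> is_mexp n (mscale z B) EB ->
  is_mexp (m * n) (mscale z (madd (kron n A mI) (kron n mI B))) (kron n EA EB).
Proof.
  intros HA HB. eapply is_mexp_proper; [| reflexivity | apply mexp_kron_sum; eauto].
  apply meq_pointwise; intros. unfold mscale, madd, kron. ring.
Qed.

(* Covariance of thermal operations: the dilation unitary commutes with the free evolution
   [V (x) e^(-i t H_B)] of system and bath, and the bath factor leaves the Gibbs state
   invariant and is traced out. *)
Lemma thermal_op_covariant (dX : nat) (HX : Mat) (beta t : R) (T : Mat -> Mat) (V rho : Mat) :
  thermal_op dX HX beta T -> is_mexp dX (mscale (mkC 0 (- t)) HX) V ->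
  meq dX (T (mmul dX (mmul dX V rho) (madj V))) (mmul dX (mmul dX V (T rho)) (madj V)).
Proof.
  intros (dB & HB & gammaB & U & _ & HHB & HgB & _ & HU & HT) HV.
  destruct (mexp_exists dB (mscale (mkC 0 (- t)) HB)) as [Bt HBt].
  set (N := (dX * dB)%nat).
  assert (HUG : commutes N U (kron dB V Bt)).
  { eapply mexp_commutes; [apply commutes_mscale, HU | apply mexp_scaled_kron_sum; eauto]. }
  assert (UBt : unitary dB Bt) by (eapply evolution_unitary; eauto).
  assert (Hin : meq N (kron dB (mmul dX (mmul dX V rho) (madj V)) gammaB)
                      (mmul N (mmul N (kron dB V Bt) (kron dB rho gammaB)) (madj (kron dB V Bt)))).
  { unfold N. rewrite kron_conj. apply kron_proper; [reflexivity |].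
    symmetry. apply unitary_conj_commuting; auto. eapply gibbs_commutes_mexp; eauto. }
  rewrite HT. fold N.
  transitivity (ptrace2 dB (mmul N (mmul N (kron dB V Bt)
    (mmul N (mmul N U (kron dB rho gammaB)) (madj U))) (madj (kron dB V Bt)))).
  { apply ptrace2_proper. fold N. rewrite Hin. apply conj_conj_comm, HUG. }
  unfold N. rewrite ptrace2_conj_kron by apply UBt.
  rewrite <- HT. reflexivity.
Qed.

Lemma thermal_op_proper (dX : nat) (HX : Mat) (beta : R) (T : Mat -> Mat) (X X' : Mat) :
  thermal_op dX HX beta T -> meq dX X X' -> meq dX (T X) (T X').
Proof.
  intros (dB & HB & gammaB & U & _ & _ & _ & _ & _ & HT) HX'.
  rewrite !HT. apply ptrace2_proper. rewrite (kron_proper _ _ _ _ gammaB gammaB HX'); reflexivity.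
Qed.

Lemma hermitian_eigenvalue_real (d : nat) (H : Mat) (v : Vec) (lam : Cplx) : hermitian d H ->
  re (csum d (fun i => Cmul (Cconj (v i)) (v i))) = 1 ->
  (forall i, (i < d)%nat -> mapply d H v i = Cmul lam (v i)) ->
  Cconj lam = lam.
Proof.
  intros HH Hnorm Hev.
  assert (Hunit : csum d (fun i => Cmul (Cconj (v i)) (v i)) = C1).
  { apply Cplx_ext; [apply Hnorm |]. clear. induction d as [|d IH]; [reflexivity |].
    simpl. rewrite IH. simpl. ring. }
  set (q := csum d (fun i => Cmul (Cconj (v i)) (mapply d H v i))).
  assert (Hq : q = lam).
  { unfold q. rewrite (csum_ext _ _ (fun i => Cmul lam (Cmul (Cconj (v i)) (v i))))
      by (intros; rewrite Hev by auto; ring).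
    rewrite csum_mull, Hunit. ring. }
  rewrite <- Hq. unfold q, mapply. rewrite Cconj_csum.
  transitivity (csum d (fun i => csum d (fun k => Cmul (v i) (Cmul (Cconj (H i k)) (Cconj (v k)))))).
  { apply csum_ext; intros. rewrite Cconj_mul, Cconj_involutive, Cconj_csum, <- csum_mull.
    apply csum_ext; intros. rewrite Cconj_mul. auto. }
  rewrite csum_swap. apply csum_ext; intros k Hk. rewrite <- csum_mull. apply csum_ext; intros i Hi.
  pose proof (HH k i Hk Hi) as E. unfold madj in E. rewrite E. ring.
Qed.

Lemma eigenproj_commutes (d : nat) (H : Mat) (v : Vec) (lam : Cplx) : hermitian d H ->
  (forall i, (i < d)%nat -> mapply d H v i = Cmul lam (v i)) -> Cconj lam = lam ->
  commutes d (proj v) H.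
Proof.
  intros HH Hev Hlam i j Hi Hj. unfold mmul, proj.
  transitivity (Cmul (v i) (Cconj (mapply d H v j))).
  { unfold mapply. rewrite Cconj_csum, <- csum_mull. apply csum_ext; intros k Hk.
    pose proof (HH k j Hk Hj) as E. unfold madj in E. rewrite Cconj_mul, E. ring. }
  transitivity (Cmul (mapply d H v i) (Cconj (v j))).
  2:{ unfold mapply. rewrite <- csum_mulr. apply csum_ext; intros; ring. }
  rewrite !Hev, Cconj_mul, Hlam by auto. ring.
Qed.

Lemma thermal_op_evolved_input (dS dW : nat) (beta t : R) (HS HW gammaS sigmaW rho P Ut : Mat)
    (T : Mat -> Mat) :
  hermitian dS HS -> hermitian dW HW -> is_gibbs dS beta HS gammaS ->
  commutes dW sigmaW HW -> commutes dW P HW ->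
  thermal_op (dS * dW) (madd (kron dW HS mI) (kron dW mI HW)) beta T ->
  meq (dS * dW) (T (kron dW rho P)) (kron dW gammaS sigmaW) ->
  is_mexp dS (mscale (mkC 0 (- t)) HS) Ut ->
  meq (dS * dW) (T (kron dW (mmul dS (mmul dS Ut rho) (madj Ut)) P)) (kron dW gammaS sigmaW).
Proof.
  intros HHS HHW HgS HsW HPW HT HT0 HUt.
  destruct (mexp_exists dW (mscale (mkC 0 (- t)) HW)) as [Wt HWt].
  assert (HV := mexp_scaled_kron_sum _ _ _ _ _ _ _ HUt HWt).
  assert (UUt : unitary dS Ut) by (eapply evolution_unitary; eauto).
  assert (UWt : unitary dW Wt) by (eapply evolution_unitary; eauto).
  assert (Hfix : forall A, commutes dW A HW -> meq dW (mmul dW (mmul dW Wt A) (madj Wt)) A).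
  { intros A HA. apply unitary_conj_commuting; auto.
    exact (mexp_commutes _ _ _ _ (commutes_mscale _ _ _ _ HA) HWt). }
  rewrite (thermal_op_proper _ _ _ _ _
             (mmul (dS * dW) (mmul (dS * dW) (kron dW Ut Wt) (kron dW rho P)) (madj (kron dW Ut Wt))) HT)
    by (rewrite kron_conj; apply kron_proper; [reflexivity | symmetry; auto]).
  rewrite (thermal_op_covariant _ _ _ _ _ _ _ HT HV), HT0, kron_conj.
  apply kron_proper; auto.
  apply unitary_conj_commuting; auto. eapply gibbs_commutes_mexp; eauto.
Qed.

Theorem mainTheorem12 :
  forall (dS dW : nat) (beta : R) (HS HW gammaS rhoS sigmaW : Mat) (v0 : Vec)
         (T : Mat -> Mat),
    (0 < dS)%nat -> (0 < dW)%nat -> 0 < beta ->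
    hermitian dS HS -> hermitian dW HW ->
    is_gibbs dS beta HS gammaS ->
    (* |0>_W is a normalized eigenvector of H_W *)
    re (csum dW (fun i => Cmul (Cconj (v0 i)) (v0 i))) = 1 ->
    (exists lam : Cplx, forall i, (i < dW)%nat -> mapply dW HW v0 i = Cmul lam (v0 i)) ->
    density dS rhoS ->
    density dW sigmaW -> commutes dW sigmaW HW ->
    thermal_op (dS * dW) (madd (kron dW HS mI) (kron dW mI HW)) beta T ->
    meq (dS * dW) (T (kron dW rhoS (proj v0))) (kron dW gammaS sigmaW) ->
    forall DrhoS : Mat, is_dephased dS HS rhoS DrhoS ->
    meq (dS * dW) (T (kron dW DrhoS (proj v0))) (kron dW gammaS sigmaW).
Proof.
  intros dS dW beta HS HW gammaS rhoS sigmaW v0 T _ _ _ HHS HHW HgS Hnorm [lam Hev]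
    _ _ HsW HT HT0 DrhoS [Ut [HUt Havg]].
  assert (HPW : commutes dW (proj v0) HW).
  { eapply eigenproj_commutes; eauto. eapply hermitian_eigenvalue_real; eauto. }
  assert (Hevolved : forall t, meq (dS * dW)
      (T (kron dW (mmul dS (mmul dS (Ut t) rhoS) (madj (Ut t))) (proj v0))) (kron dW gammaS sigmaW))
    by (intros; eapply thermal_op_evolved_input; eauto).
  assert (Havg_out : Mtime_avg_cv (dS * dW)
      (fun t => T (kron dW (mmul dS (mmul dS (Ut t) rhoS) (madj (Ut t))) (proj v0)))
      (T (kron dW DrhoS (proj v0))))
    by (eapply thermal_op_time_avg; eauto; apply Mtime_avg_cv_kron_l; exact Havg).
  intros i j Hi Hj. eapply Ctime_avg_cv_unique; [apply Havg_out; auto |].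
  eapply Ctime_avg_cv_ext; [| apply Ctime_avg_cv_const].
  intros t. symmetry. apply Hevolved; auto.
Qed.
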